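(* Let $(E,P,\vartheta)$ be a complete bipolar metric space and let $F\colon E\cup P\to E\cup P$ be a covariant mapping which is a polynomial contraction, i.e. there exist $\pi\in(0,1)$, an integer $\sigma\geq 1$ and functions $q_\upsilon\colon E\times P\to[0,\infty)$, $\upsilon=0,\dots,\sigma$, such that $$\sum_{\upsilon=0}^{\sigma} q_\upsilon(Fe,Ff)\,\vartheta^\upsilon(Fe,Ff)\leq \pi\sum_{\upsilon=0}^{\sigma} q_\upsilon(e,f)\,\vartheta^\upsilon(e,f)\quad\text{for all } e\in E,\ f\in P.$$ Assume moreover that (i) $F$ is continuous, and (ii) there exist $\varrho\in\{1,\dots,\sigma\}$ and $Q_\varrho>0$ such that $q_\varrho(e,f)\geq Q_\varrho$ for all $e\in E$, $f\in P$. Then $F$ has a unique fixed point.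
   Context: A bipolar metric space is a triple $(E,P,\vartheta)$ where $E,P$ are nonempty sets and $\vartheta\colon E\times P\to[0,\infty)$ satisfies: (1) for $e\in E$, $f\in P$, $\vartheta(e,f)=0$ iff $e=f$; (2) $\vartheta(e,f)=\vartheta(f,e)$ whenever $e,f\in E\cap P$; (3) $\vartheta(e,f)\leq\vartheta(e,z)+\vartheta(r,z)+\vartheta(r,f)$ for all $e,r\in E$, $z,f\in P$. A sequence $(x_n)$ in $E$ converges to $y\in P$ if $\vartheta(x_n,y)\to0$; a sequence $(y_n)$ in $P$ converges to $x\in E$ if $\vartheta(x,y_n)\to 0$. A bisequence $(x_n,y_n)$ with $x_n\in E$, $y_n\in P$ is convergent if both $(x_n)$ and $(y_n)$ converge, biconvergent if they converge to the same point, and Cauchy if for every $\varepsilon>0$ there is $N$ with $\vartheta(x_n,y_m)<\varepsilon$ for all $n,m\geq N$. The space is complete if every Cauchy bisequence is convergent. A map $F\colon E\cup P\to E\cup P$ is covariant if $F(E)\subseteq E$ and $F(P)\subseteq P$. $F$ is continuous if whenever a sequence $(u_n)$ (in $E$ or in $P$) converges to a point $v$, the sequence $(Fu_n)$ converges to $Fv$. $\vartheta^\upsilon$ denotes the $\upsilon$-th power of $\vartheta$, with $\vartheta^0\equiv 1$. A fixed point of $F$ is a point $g$ with $Fg=g$. *)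

From Stdlib Require Export Reals.
Open Scope R_scope.

(* A bipolar metric space on subsets E, P of an ambient type U.
   The distance theta is a total function U -> U -> R, but only its
   values on E x P are meaningful. *)
Definition bipolar_metric {U : Type} (E P : U -> Prop) (theta : U -> U -> R) : Prop :=
  (exists e, E e) /\ (exists p, P p) /\
  (forall e f, E e -> P f -> 0 <= theta e f) /\
  (forall e f, E e -> P f -> (theta e f = 0 <-> e = f)) /\
  (forall e f, E e -> P e -> E f -> P f -> theta e f = theta f e) /\
  (forall e r z f, E e -> E r -> P z -> P f ->
     theta e f <= theta e z + theta r z + theta r f).

Definition cvg_EP {U : Type} (theta : U -> U -> R) (x : nat -> U) (y : U) : Prop :=
  Un_cv (fun n => theta (x n) y) 0.

Definition cvg_PE {U : Type} (theta : U -> U -> R) (y : nat -> U) (x : U) : Prop :=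
  Un_cv (fun n => theta x (y n)) 0.

Definition cauchy_biseq {U : Type} (theta : U -> U -> R) (x y : nat -> U) : Prop :=
  forall eps, 0 < eps -> exists N : nat,
    forall n m, (n >= N)%nat -> (m >= N)%nat -> theta (x n) (y m) < eps.

Definition bipolar_complete {U : Type} (E P : U -> Prop) (theta : U -> U -> R) : Prop :=
  forall x y : nat -> U, (forall n, E (x n)) -> (forall n, P (y n)) ->
    cauchy_biseq theta x y ->
    (exists a, P a /\ cvg_EP theta x a) /\ (exists b, E b /\ cvg_PE theta y b).

Definition covariant {U : Type} (E P : U -> Prop) (F : U -> U) : Prop :=
  (forall e, E e -> E (F e)) /\ (forall p, P p -> P (F p)).

Definition bipolar_continuous {U : Type} (E P : U -> Prop) (theta : U -> U -> R)
  (F : U -> U) : Prop :=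
  (forall (x : nat -> U) (y : U), (forall n, E (x n)) -> P y ->
     cvg_EP theta x y -> cvg_EP theta (fun n => F (x n)) (F y)) /\
  (forall (y : nat -> U) (x : U), (forall n, P (y n)) -> E x ->
     cvg_PE theta y x -> cvg_PE theta (fun n => F (y n)) (F x)).

Definition poly_sum {U : Type} (theta : U -> U -> R) (q : nat -> U -> U -> R)
  (sigma : nat) (e f : U) : R :=
  sum_f_R0 (fun u => q u e f * theta e f ^ u) sigma.

Definition polynomial_contraction {U : Type} (E P : U -> Prop) (theta : U -> U -> R)
  (F : U -> U) (pi : R) (sigma : nat) (q : nat -> U -> U -> R) : Prop :=
  0 < pi < 1 /\ (1 <= sigma)%nat /\
  (forall u e f, (u <= sigma)%nat -> E e -> P f -> 0 <= q u e f) /\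
  (forall e f, E e -> P f ->
     poly_sum theta q sigma (F e) (F f) <= pi * poly_sum theta q sigma e f).

(* Along the orbits x_n = F^n e0, y_n = F^n f0 the polynomial sum S decays like pi^n, and since
   S(e, f) >= Q_rho theta(e, f)^rho, taking rho-th roots gives theta(x_n, y_n) <= c r^n and
   theta(x_(n+1), y_n) <= c r^n with r = pi^(1/rho) < 1. Telescoping with the bipolar triangle
   inequality makes (x_n, y_n) a Cauchy bisequence; its limits coincide and, by continuity, form a
   fixed point. Two fixed points e in E, f in P satisfy S(e, f) <= pi S(e, f), so S(e, f) = 0 and
   e = f. *)
From Stdlib Require Import Reals Lra Lia.
Open Scope R_scope.

Lemma sum_f_R0_nonneg (f : nat -> R) (n : nat) :
  (forall i, (i <= n)%nat -> 0 <= f i) -> 0 <= sum_f_R0 f n.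
Proof.
  induction n as [|n IH]; intros Hf; simpl.
  - apply Hf; lia.
  - assert (0 <= sum_f_R0 f n) by (apply IH; intros; apply Hf; lia).
    assert (0 <= f (S n)) by (apply Hf; lia).
    lra.
Qed.

Lemma sum_f_R0_term_le (f : nat -> R) (n k : nat) :
  (forall i, (i <= n)%nat -> 0 <= f i) -> (k <= n)%nat -> f k <= sum_f_R0 f n.
Proof.
  induction n as [|n IH]; intros Hf Hk; simpl.
  - replace k with 0%nat by lia; lra.
  - destruct (Nat.eq_dec k (S n)) as [->|Hne].
    + assert (0 <= sum_f_R0 f n) by (apply sum_f_R0_nonneg; intros; apply Hf; lia).
      lra.
    + assert (f k <= sum_f_R0 f n) by (apply IH; [intros; apply Hf|]; lia).
      assert (0 <= f (S n)) by (apply Hf; lia).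
      lra.
Qed.

Lemma pow_lt_pow_l (a b : R) (n : nat) :
  (1 <= n)%nat -> 0 <= a < b -> a ^ n < b ^ n.
Proof.
  intros Hn Hab; induction n as [|n IH]; [lia|].
  destruct (Nat.eq_dec n 0) as [->|Hn0]; [simpl; lra|].
  assert (a ^ n < b ^ n) by (apply IH; lia).
  assert (0 <= a ^ n) by (apply pow_le; lra).
  simpl; nra.
Qed.

Lemma pow_le_reg_l (a b : R) (n : nat) :
  (1 <= n)%nat -> 0 <= a -> 0 <= b -> a ^ n <= b ^ n -> a <= b.
Proof.
  intros Hn Ha Hb Hle; destruct (Rle_lt_dec a b) as [|Hba]; [assumption|].
  pose proof (pow_lt_pow_l b a n Hn (conj Hb Hba)); lra.
Qed.

Lemma exists_pow_root (K : R) (n : nat) :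
  (1 <= n)%nat -> 0 < K -> exists c, 0 < c /\ c ^ n = K.
Proof.
  intros Hn HK; exists (Rpower K (/ INR n)); split.
  - apply exp_pos.
  - rewrite <- Rpower_pow by apply exp_pos.
    rewrite Rpower_mult, Rinv_l by (apply not_0_INR; lia).
    apply Rpower_1, HK.
Qed.

Lemma pow_le_geometric_bound (rho : nat) (Q pi B : R) :
  (1 <= rho)%nat -> 0 < Q -> 0 < pi < 1 -> 0 <= B ->
  exists c r, 0 <= c /\ 0 <= r < 1 /\
    forall n t, 0 <= t -> Q * t ^ rho <= pi ^ n * B -> t <= c * r ^ n.
Proof.
  intros Hrho HQ Hpi HB.
  destruct (exists_pow_root (B / Q + 1) rho Hrho) as [c [Hc Hcrho]].
  { assert (0 <= B / Q) by (apply Rmult_le_pos; [|apply Rlt_le, Rinv_0_lt_compat]; lra).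
    lra. }
  destruct (exists_pow_root pi rho Hrho (proj1 Hpi)) as [r [Hr Hrrho]].
  assert (Hr1 : r < 1).
  { destruct (Rlt_le_dec r 1) as [|Hge]; [assumption|].
    pose proof (pow_incr 1 r rho (conj Rle_0_1 Hge)); rewrite pow1 in *; lra. }
  exists c, r; split; [lra|]; split; [lra|].
  intros n t Ht Hle.
  apply (pow_le_reg_l _ _ rho Hrho Ht).
  { apply Rmult_le_pos; [lra|apply pow_le; lra]. }
  rewrite Rpow_mult_distr, Hcrho, <- pow_mult, Nat.mul_comm, pow_mult, Hrrho.
  apply (Rmult_le_reg_l Q); [exact HQ|].
  assert (0 < pi ^ n) by (apply pow_lt; lra).
  replace (Q * ((B / Q + 1) * pi ^ n)) with (pi ^ n * B + Q * pi ^ n) by (field; lra).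
  nra.
Qed.

Lemma geometric_cv0 (c r : R) : 0 <= r < 1 -> Un_cv (fun n => c * r ^ n) 0.
Proof.
  intros Hr eps Heps.
  assert (Hc : 0 < Rabs c + 1) by (pose proof (Rabs_pos c); lra).
  destruct (pow_lt_1_zero r ltac:(rewrite Rabs_pos_eq; lra) (eps / (Rabs c + 1))
              ltac:(apply Rdiv_lt_0_compat; lra)) as [N HN].
  exists N; intros n Hn; specialize (HN n Hn).
  unfold Rdist; rewrite Rminus_0_r, Rabs_mult.
  assert (Rabs c * Rabs (r ^ n) <= (Rabs c + 1) * Rabs (r ^ n))
    by (pose proof (Rabs_pos (r ^ n)); nra).
  assert ((Rabs c + 1) * Rabs (r ^ n) < (Rabs c + 1) * (eps / (Rabs c + 1)))
    by (apply Rmult_lt_compat_l; lra).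
  replace ((Rabs c + 1) * (eps / (Rabs c + 1))) with eps in * by (field; lra).
  lra.
Qed.

Lemma Un_cv_succ (u : nat -> R) (l : R) : Un_cv u l -> Un_cv (fun n => u (S n)) l.
Proof.
  intros Hu; apply (Un_cv_ext (fun n => u (n + 1)%nat)); [|exact (CV_shift' u 1 l Hu)].
  intros n; now rewrite Nat.add_1_r.
Qed.

Section BipolarMetric.

Context {U : Type} {E P : U -> Prop} {theta : U -> U -> R}.
Hypothesis Hmetric : bipolar_metric E P theta.

Lemma bipolar_dist_nonneg e f : E e -> P f -> 0 <= theta e f.
Proof. apply Hmetric. Qed.

Lemma bipolar_dist_eq0 e f : E e -> P f -> theta e f = 0 -> e = f.
Proof. intros He Hf; apply Hmetric; assumption. Qed.

Lemma bipolar_triangle e r z f : E e -> E r -> P z -> P f ->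
  theta e f <= theta e z + theta r z + theta r f.
Proof. apply Hmetric. Qed.

Lemma cauchy_biseq_diag_cv (x y : nat -> U) :
  (forall n, E (x n)) -> (forall n, P (y n)) -> cauchy_biseq theta x y ->
  Un_cv (fun n => theta (x n) (y n)) 0.
Proof.
  intros Hx Hy Hcauchy eps Heps.
  destruct (Hcauchy eps Heps) as [N HN]; exists N; intros n Hn.
  unfold Rdist; rewrite Rminus_0_r, Rabs_pos_eq by (apply bipolar_dist_nonneg; auto).
  apply HN; assumption.
Qed.

Lemma bipolar_eq_of_cv (b a : U) (x y : nat -> U) :
  E b -> P a -> (forall n, E (x n)) -> (forall n, P (y n)) ->
  Un_cv (fun n => theta b (y n)) 0 -> Un_cv (fun n => theta (x n) (y n)) 0 ->
  Un_cv (fun n => theta (x n) a) 0 -> b = a.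
Proof.
  intros Hb Ha Hx Hy Hby Hxy Hxa.
  apply bipolar_dist_eq0; [assumption|assumption|].
  apply Rle_antisym; [|apply bipolar_dist_nonneg; assumption].
  assert (Hconst : Un_cv (fun _ => theta b a) (theta b a)).
  { intros eps Heps; exists 0%nat; intros; rewrite Rdist_eq; assumption. }
  replace 0 with (0 + 0 + 0) by ring.
  apply (Rle_cv_lim (fun n => bipolar_triangle b (x n) (y n) a Hb (Hx n) (Hy n) Ha)
           Hconst).
  apply CV_plus; [apply CV_plus|]; assumption.
Qed.

Section GeometricBisequence.

Variables (x y : nat -> U) (c r : R).
Hypotheses (Hx : forall n, E (x n)) (Hy : forall n, P (y n)).
Hypotheses (Hc : 0 <= c) (Hr : 0 <= r < 1).
Hypothesis Hdiag : forall n, theta (x n) (y n) <= c * r ^ n.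
Hypothesis Hnext : forall n, theta (x (S n)) (y n) <= c * r ^ n.

(* D r^n = 2 (c r^n + c r^(n+1) + ...): each telescoping step adds two triangle terms. *)
Let D := 2 * c / (1 - r).

Lemma geometric_tail_sub (t : R) : D * t - D * (r * t) = 2 * c * t.
Proof. unfold D; field; lra. Qed.

Lemma dist_le_geometric_right n k :
  theta (x n) (y (n + k)%nat) <= (c + D) * r ^ n - D * r ^ (n + k).
Proof.
  induction k as [|k IH].
  - rewrite Nat.add_0_r; specialize (Hdiag n); lra.
  - rewrite Nat.add_succ_r.
    pose proof (bipolar_triangle (x n) (x (S (n + k))) (y (n + k)%nat) (y (S (n + k)))
                  (Hx _) (Hx _) (Hy _) (Hy _)).
    pose proof (Hnext (n + k)); pose proof (Hdiag (S (n + k))).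
    pose proof (geometric_tail_sub (r ^ (n + k))).
    assert (c * (r * r ^ (n + k)) <= c * r ^ (n + k)).
    { apply Rmult_le_compat_l; [assumption|].
      pose proof (pow_le r (n + k) (proj1 Hr)); nra. }
    simpl pow in *; lra.
Qed.

Lemma dist_le_geometric_left m k :
  theta (x (m + k)%nat) (y m) <= (c + D) * r ^ m - D * r ^ (m + k).
Proof.
  induction k as [|k IH].
  - rewrite Nat.add_0_r; specialize (Hdiag m); lra.
  - rewrite Nat.add_succ_r.
    pose proof (bipolar_triangle (x (S (m + k))) (x (m + k)%nat) (y (m + k)%nat) (y m)
                  (Hx _) (Hx _) (Hy _) (Hy _)).
    pose proof (Hnext (m + k)); pose proof (Hdiag (m + k)).
    pose proof (geometric_tail_sub (r ^ (m + k))).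
    simpl pow in *; lra.
Qed.

Lemma geometric_cauchy_biseq : cauchy_biseq theta x y.
Proof.
  intros eps Heps.
  destruct (geometric_cv0 (c + D) r Hr eps Heps) as [N HN]; exists N; intros n m Hn Hm.
  assert (HD : 0 <= D) by (apply Rmult_le_pos; [|apply Rlt_le, Rinv_0_lt_compat]; lra).
  assert (Hbound : forall k, (k >= N)%nat -> (c + D) * r ^ k < eps).
  { intros k Hk; specialize (HN k Hk); unfold Rdist in HN.
    rewrite Rminus_0_r in HN; pose proof (Rle_abs ((c + D) * r ^ k)); lra. }
  destruct (Nat.le_gt_cases n m) as [Hnm|Hmn].
  - replace m with (n + (m - n))%nat by lia.
    pose proof (dist_le_geometric_right n (m - n)).
    pose proof (pow_le r (n + (m - n)) (proj1 Hr)).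
    pose proof (Hbound n Hn); nra.
  - replace n with (m + (n - m))%nat by lia.
    pose proof (dist_le_geometric_left m (n - m)).
    pose proof (pow_le r (m + (n - m)) (proj1 Hr)).
    pose proof (Hbound m Hm); nra.
Qed.

End GeometricBisequence.

End BipolarMetric.

Section PolynomialContraction.

Context {U : Type} {E P : U -> Prop} {theta : U -> U -> R} {F : U -> U}.
Context {pi : R} {sigma : nat} {q : nat -> U -> U -> R} {rho : nat} {Qrho : R}.
Hypothesis Hmetric : bipolar_metric E P theta.
Hypothesis Hcov : covariant E P F.
Hypothesis Hcontr : polynomial_contraction E P theta F pi sigma q.
Hypotheses (Hrho1 : (1 <= rho)%nat) (Hrho : (rho <= sigma)%nat) (HQ : 0 < Qrho).
Hypothesis Hqrho : forall e f, E e -> P f -> Qrho <= q rho e f.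

Lemma poly_sum_nonneg e f : E e -> P f -> 0 <= poly_sum theta q sigma e f.
Proof.
  intros He Hf; apply sum_f_R0_nonneg; intros u Hu.
  apply Rmult_le_pos; [apply Hcontr; assumption|].
  apply pow_le, (bipolar_dist_nonneg Hmetric); assumption.
Qed.

Lemma poly_sum_ge_pow e f : E e -> P f -> Qrho * theta e f ^ rho <= poly_sum theta q sigma e f.
Proof.
  intros He Hf.
  assert (Hpow : 0 <= theta e f ^ rho)
    by (apply pow_le, (bipolar_dist_nonneg Hmetric); assumption).
  apply Rle_trans with (q rho e f * theta e f ^ rho).
  - apply Rmult_le_compat_r; [assumption|apply Hqrho; assumption].
  - apply (sum_f_R0_term_le (fun u => q u e f * theta e f ^ u)); [|assumption].
    intros u Hu; apply Rmult_le_pos; [apply Hcontr; assumption|].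
    apply pow_le, (bipolar_dist_nonneg Hmetric); assumption.
Qed.

Lemma poly_sum_le0_eq e f : E e -> P f -> poly_sum theta q sigma e f <= 0 -> e = f.
Proof.
  intros He Hf Hle; apply (bipolar_dist_eq0 Hmetric); [assumption|assumption|].
  pose proof (poly_sum_ge_pow e f He Hf).
  destruct (Rle_lt_or_eq_dec 0 (theta e f)) as [Hpos|Hzero].
  - apply (bipolar_dist_nonneg Hmetric); assumption.
  - pose proof (pow_lt _ rho Hpos); nra.
  - symmetry; assumption.
Qed.

Lemma fixed_points_eq e f : E e -> P f -> F e = e -> F f = f -> e = f.
Proof.
  intros He Hf HFe HFf; apply poly_sum_le0_eq; [assumption|assumption|].
  destruct Hcontr as [Hpi [_ [_ Hle]]].
  pose proof (Hle e f He Hf) as Hfix; rewrite HFe, HFf in Hfix.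
  pose proof (poly_sum_nonneg e f He Hf); nra.
Qed.

Lemma iter_in_E n e : E e -> E (Nat.iter n F e).
Proof. apply Nat.iter_invariant, Hcov. Qed.

Lemma iter_in_P n f : P f -> P (Nat.iter n F f).
Proof. apply Nat.iter_invariant, Hcov. Qed.

Lemma poly_sum_iter_le n e f : E e -> P f ->
  poly_sum theta q sigma (Nat.iter n F e) (Nat.iter n F f)
  <= pi ^ n * poly_sum theta q sigma e f.
Proof.
  intros He Hf; destruct Hcontr as [Hpi [_ [_ Hle]]].
  induction n as [|n IH]; simpl; [lra|].
  apply Rle_trans with (pi * poly_sum theta q sigma (Nat.iter n F e) (Nat.iter n F f)).
  - apply Hle; [apply iter_in_E|apply iter_in_P]; assumption.
  - rewrite Rmult_assoc; apply Rmult_le_compat_l; lra.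
Qed.

Lemma iter_cauchy_biseq e f : E e -> P f ->
  cauchy_biseq theta (fun n => Nat.iter n F e) (fun n => Nat.iter n F f).
Proof.
  intros He Hf.
  assert (HFe : E (F e)) by (apply Hcov; assumption).
  pose proof (poly_sum_nonneg e f He Hf); pose proof (poly_sum_nonneg (F e) f HFe Hf).
  set (B := poly_sum theta q sigma e f + poly_sum theta q sigma (F e) f).
  destruct (pow_le_geometric_bound rho Qrho pi B Hrho1 HQ (proj1 Hcontr) ltac:(unfold B; lra))
    as [c [r [Hc [Hr Hbound]]]].
  assert (Hgeom : forall n e', E e' -> poly_sum theta q sigma e' f <= B ->
            theta (Nat.iter n F e') (Nat.iter n F f) <= c * r ^ n).
  { intros n e' He' HB; apply Hbound.
    - apply (bipolar_dist_nonneg Hmetric); [apply iter_in_E|apply iter_in_P]; assumption.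
    - apply Rle_trans with (1 := poly_sum_ge_pow _ _ (iter_in_E n _ He') (iter_in_P n _ Hf)).
      apply Rle_trans with (1 := poly_sum_iter_le n e' f He' Hf).
      apply Rmult_le_compat_l; [apply pow_le; apply Rlt_le, Hcontr|assumption]. }
  apply (geometric_cauchy_biseq Hmetric) with c r; try assumption.
  - intros n; apply iter_in_E; assumption.
  - intros n; apply iter_in_P; assumption.
  - intros n; apply Hgeom; [assumption|unfold B; lra].
  - intros n; rewrite Nat.iter_succ_r; apply Hgeom; [assumption|unfold B; lra].
Qed.

Hypothesis Hcomplete : bipolar_complete E P theta.
Hypothesis Hcont : bipolar_continuous E P theta F.

Lemma exists_fixed_point : exists a, E a /\ P a /\ F a = a.
Proof.
  destruct Hmetric as [[e He] [[f Hf] _]].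
  set (x := fun n => Nat.iter n F e); set (y := fun n => Nat.iter n F f).
  assert (Hx : forall n, E (x n)) by (intros n; apply iter_in_E; assumption).
  assert (Hy : forall n, P (y n)) by (intros n; apply iter_in_P; assumption).
  assert (Hcauchy : cauchy_biseq theta x y) by (apply iter_cauchy_biseq; assumption).
  pose proof (cauchy_biseq_diag_cv Hmetric x y Hx Hy Hcauchy) as Hxy.
  destruct (Hcomplete x y Hx Hy Hcauchy) as [[a [Pa Hxa]] [b [Eb Hyb]]].
  assert (Hba : b = a) by exact (bipolar_eq_of_cv Hmetric b a x y Eb Pa Hx Hy Hyb Hxy Hxa).
  subst b.
  exists a; split; [assumption|split; [assumption|]].
  symmetry.
  apply (bipolar_eq_of_cv Hmetric a (F a) (fun n => x (S n)) (fun n => y (S n))).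
  - assumption.
  - apply Hcov; assumption.
  - intros n; apply Hx.
  - intros n; apply Hy.
  - exact (Un_cv_succ _ _ Hyb).
  - exact (Un_cv_succ _ _ Hxy).
  - exact (proj1 Hcont x a Hx Pa Hxa).
Qed.

End PolynomialContraction.

Theorem theorem3p2 (U : Type) (E P : U -> Prop) (theta : U -> U -> R)
  (F : U -> U) (pi : R) (sigma : nat) (q : nat -> U -> U -> R)
  (rho : nat) (Qrho : R) :
  bipolar_metric E P theta ->
  bipolar_complete E P theta ->
  covariant E P F ->
  polynomial_contraction E P theta F pi sigma q ->
  bipolar_continuous E P theta F ->
  (1 <= rho)%nat -> (rho <= sigma)%nat -> 0 < Qrho ->
  (forall e f, E e -> P f -> Qrho <= q rho e f) ->
  exists g, (E g \/ P g) /\ F g = g /\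
    (forall h, (E h \/ P h) -> F h = h -> h = g).
Proof.
  intros Hmetric Hcomplete Hcov Hcontr Hcont Hrho1 Hrho HQ Hqrho.
  destruct (exists_fixed_point Hmetric Hcov Hcontr Hrho1 Hrho HQ Hqrho Hcomplete Hcont)
    as [a [Ea [Pa HFa]]].
  pose proof (fixed_points_eq Hmetric Hcontr Hrho HQ Hqrho) as Hunique.
  exists a; split; [left; assumption|split; [assumption|]].
  intros h [Eh|Ph] HFh.
  - exact (Hunique h a Eh Pa HFh HFa).
  - symmetry; exact (Hunique a h Ea Ph HFa HFh).
Qed.
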